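(* Let $G$ be a directed acyclic graph with edge partition into pages including three pages $\mathtt{Red}$, $\mathtt{Blue}$, $\mathtt{Green}$, and let $\pi$ be a valid ordering of $(G,P)$. Suppose $G$ contains distinct vertices $l,\alpha,\omega,a',b',c',h,a'',b'',c''$ and the edges $(l,\alpha),(l,\omega)\in\mathtt{Red}$; $(\alpha,a'),(\alpha,b'),(\omega,b'),(\omega,c')\in\mathtt{Blue}$; $(a',h),(b',h),(c',h)\in\mathtt{Green}$; and $(a',a''),(b',b''),(c',c'')\in\mathtt{Red}$. If $\pi(h)<\min(\pi(a''),\pi(b''),\pi(c''))$, then either $\pi(a'')<\pi(b'')<\pi(c'')$ or $\pi(c'')<\pi(b'')<\pi(a'')$.
   Context: For a DAG $G$ with a partition $P$ of its edges into pages, a valid ordering is a linear ordering $\pi$ of the vertices that is a topological order ($\pi(u)<\pi(v)$ for each edge $(u,v)$) and such that no two edges in the same page cross; edges with endpoints $p_1,q_1$ and $p_2,q_2$ (with $\pi(p_t)<\pi(q_t)$, all four distinct) cross iff $\pi(p_1)<\pi(p_2)<\pi(q_1)<\pi(q_2)$ or $\pi(p_2)<\pi(p_1)<\pi(q_2)<\pi(q_1)$. *)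

From mathcomp Require Import all_boot.
Set Implicit Arguments. Unset Strict Implicit. Unset Printing Implicit Defensive.

Definition acyclic (V : finType) (E : rel V) : Prop :=
  forall u v, E u v -> ~~ connect E v u.

(* A partition of the edges into pages (page labels of type P) is a function
   assigning to each edge (u,v) its page [page u v]; only its values on edges
   matter. *)

Definition cross (V : Type) (pi : V -> nat) (p1 q1 p2 q2 : V) : bool :=
  ((pi p1 < pi p2) && (pi p2 < pi q1) && (pi q1 < pi q2)) ||
  ((pi p2 < pi p1) && (pi p1 < pi q2) && (pi q2 < pi q1)).

Definition valid_ordering (V : finType) (P : Type) (E : rel V)
    (page : V -> V -> P) (pi : V -> nat) : Prop :=
  injective pi /\
  (forall u v, E u v -> pi u < pi v) /\
  (forall p1 q1 p2 q2, E p1 q1 -> E p2 q2 -> page p1 q1 = page p2 q2 ->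
     uniq [:: p1; q1; p2; q2] -> ~~ cross pi p1 q1 p2 q2).

(** Up to the symmetry exchanging [alpha, a', a''] with [omega, c', c''] we may
    assume that [alpha] precedes [omega].  The key fact is that in a page an
    edge starting strictly inside the span of another edge must also end inside
    it.  The red edge [(l, omega)] contains [a'] unless [omega] precedes [a']
    (then [a''] would precede [omega], but [a''] comes after [h] and hence after
    [omega]); so [alpha < omega < a'], and the blue edges nest to give
    [c' < b' < a'].  Finally the red edges [(c', c'')], [(b', b'')], [(a', a'')]
    start in this order below [h] and end above [h], so they must nest as well,
    which forces [a'' < b'' < c'']. *)

From mathcomp Require Import all_boot.
From mathcomp Require Import zify.

Set Implicit Arguments.
Unset Strict Implicit.
Unset Printing Implicit Defensive.

Lemma nth_uniq_neq (T : eqType) (x0 : T) (s : seq T) i j :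
  uniq s -> i < size s -> j < size s -> i != j -> nth x0 s i != nth x0 s j.
Proof. by move=> *; rewrite nth_uniq. Qed.

Lemma uniq_swap_branches (T : eqType) (l alpha omega a' b' c' h a'' b'' c'' : T) :
  uniq [:: l; alpha; omega; a'; b'; c'; h; a''; b''; c''] ->
  uniq [:: l; omega; alpha; c'; b'; a'; h; c''; b''; a''].
Proof.
rewrite (@perm_uniq _ _ [:: l; alpha; omega; a'; b'; c'; h; a''; b''; c'']) //.
by apply/permP => p /=; lia.
Qed.

Section ValidOrdering.

Variables (V : finType) (P : Type) (E : rel V) (page : V -> V -> P)
  (pi : V -> nat).
Hypothesis valid : valid_ordering E page pi.

Lemma valid_edge_lt u v : E u v -> pi u < pi v.
Proof. by case: valid => _ [+ _]; apply. Qed.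

Lemma valid_nested_edge p1 q1 p2 q2 :
  E p1 q1 -> E p2 q2 -> page p1 q1 = page p2 q2 -> pi q2 != pi q1 ->
  pi p1 < pi p2 < pi q1 -> pi q2 < pi q1.
Proof.
move=> e1 e2 same_page ne_q /andP[lt12 lt2q1].
have [inj_pi [_ noncross]] := valid.
have lt2q2 := valid_edge_lt e2.
have lt1q1 := valid_edge_lt e1.
have distinct : uniq [:: p1; q1; p2; q2].
  by rewrite -(map_inj_uniq inj_pi) /= !inE; lia.
have := noncross _ _ _ _ e1 e2 same_page distinct.
rewrite /cross; lia.
Qed.

Lemma leaves_increasing_of_lt (Red Blue : P)
    (l alpha omega a' b' c' h a'' b'' c'' : V) :
  uniq [:: l; alpha; omega; a'; b'; c'; h; a''; b''; c''] ->
  E l alpha -> E l omega -> page l omega = Red ->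
  E alpha a' -> page alpha a' = Blue ->
  E alpha b' -> page alpha b' = Blue ->
  E omega b' -> page omega b' = Blue ->
  E omega c' -> page omega c' = Blue ->
  E a' h -> E b' h ->
  E a' a'' -> page a' a'' = Red ->
  E b' b'' -> page b' b'' = Red ->
  E c' c'' -> page c' c'' = Red ->
  pi h < minn (pi a'') (minn (pi b'') (pi c'')) ->
  pi alpha < pi omega -> pi a'' < pi b'' < pi c''.
Proof.
move=> distinct El_alpha El_omega Pl_omega Ealpha_a' Palpha_a' Ealpha_b' Palpha_b'
  Eomega_b' Pomega_b' Eomega_c' Pomega_c' Ea'_h Eb'_h Ea'_a'' Pa'_a''
  Eb'_b'' Pb'_b'' Ec'_c'' Pc'_c'' h_below lt_alpha_omega.
have [inj_pi _] := valid.
have ne_pi i j : i < 10 -> j < 10 -> i != j ->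
    pi (nth l [:: l; alpha; omega; a'; b'; c'; h; a''; b''; c''] i) !=
    pi (nth l [:: l; alpha; omega; a'; b'; c'; h; a''; b''; c''] j).
  by move=> *; rewrite (inj_eq inj_pi) nth_uniq_neq.
move: h_below; rewrite !leq_min => /and3P[lt_h_a'' lt_h_b'' lt_h_c''].
have lt_l_a' := ltn_trans (valid_edge_lt El_alpha) (valid_edge_lt Ealpha_a').
have lt_omega_h := ltn_trans (valid_edge_lt Eomega_b') (valid_edge_lt Eb'_h).
have lt_a'_h := valid_edge_lt Ea'_h.
have lt_omega_a' : pi omega < pi a'.
  case: ltngtP (ne_pi 2 3 isT isT isT) => // lt_a'_omega _.
  have : pi a'' < pi omega.
    apply: (valid_nested_edge El_omega Ea'_a''); first by congruence.
      exact: (ne_pi 7 2).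
    by rewrite lt_l_a'.
  by rewrite ltnNge ltnW // (ltn_trans lt_omega_h).
have lt_c'_b' : pi c' < pi b'.
  apply: (valid_nested_edge Ealpha_b' Eomega_c'); first by congruence.
    exact: (ne_pi 5 4).
  by rewrite lt_alpha_omega (valid_edge_lt Eomega_b').
have lt_b'_a' : pi b' < pi a'.
  apply: (valid_nested_edge Ealpha_a' Eomega_b'); first by congruence.
    exact: (ne_pi 4 3).
  by rewrite lt_alpha_omega.
have lt_b''_c'' : pi b'' < pi c''.
  apply: (valid_nested_edge Ec'_c'' Eb'_b''); first by congruence.
    exact: (ne_pi 8 9).
  by rewrite lt_c'_b' (ltn_trans (valid_edge_lt Eb'_h)).
have lt_a''_b'' : pi a'' < pi b''.
  apply: (valid_nested_edge Eb'_b'' Ea'_a''); first by congruence.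
    exact: (ne_pi 7 8).
  by rewrite lt_b'_a' (ltn_trans lt_a'_h).
by rewrite lt_a''_b'' lt_b''_c''.
Qed.

End ValidOrdering.

Theorem lemma1 (V : finType) (P : Type) (E : rel V) (page : V -> V -> P)
    (Red Blue Green : P) (pi : V -> nat)
    (l alpha omega a' b' c' h a'' b'' c'' : V) :
  acyclic E ->
  Red <> Blue -> Red <> Green -> Blue <> Green ->
  valid_ordering E page pi ->
  uniq [:: l; alpha; omega; a'; b'; c'; h; a''; b''; c''] ->
  E l alpha -> page l alpha = Red ->
  E l omega -> page l omega = Red ->
  E alpha a' -> page alpha a' = Blue ->
  E alpha b' -> page alpha b' = Blue ->
  E omega b' -> page omega b' = Blue ->
  E omega c' -> page omega c' = Blue ->
  E a' h -> page a' h = Green ->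
  E b' h -> page b' h = Green ->
  E c' h -> page c' h = Green ->
  E a' a'' -> page a' a'' = Red ->
  E b' b'' -> page b' b'' = Red ->
  E c' c'' -> page c' c'' = Red ->
  pi h < minn (pi a'') (minn (pi b'') (pi c'')) ->
  ((pi a'' < pi b'') && (pi b'' < pi c'')) \/
  ((pi c'' < pi b'') && (pi b'' < pi a'')).
Proof.
move=> _ _ _ _ valid distinct El_alpha Pl_alpha El_omega Pl_omega
  Ealpha_a' Palpha_a' Ealpha_b' Palpha_b' Eomega_b' Pomega_b' Eomega_c' Pomega_c'
  Ea'_h _ Eb'_h _ Ec'_h _ Ea'_a'' Pa'_a'' Eb'_b'' Pb'_b'' Ec'_c'' Pc'_c'' h_below.
have [inj_pi _] := valid.
case: (ltngtP (pi alpha) (pi omega)) => [lt_alpha_omega|lt_omega_alpha|eq_pi].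
- left; exact: (leaves_increasing_of_lt valid distinct El_alpha El_omega Pl_omega
    Ealpha_a' Palpha_a' Ealpha_b' Palpha_b' Eomega_b' Pomega_b' Eomega_c' Pomega_c'
    Ea'_h Eb'_h Ea'_a'' Pa'_a'' Eb'_b'' Pb'_b'' Ec'_c'' Pc'_c'' h_below).
- right; apply: (leaves_increasing_of_lt valid _ El_omega El_alpha Pl_alpha
    Eomega_c' Pomega_c' Eomega_b' Pomega_b' Ealpha_b' Palpha_b' Ealpha_a' Palpha_a'
    Ec'_h Eb'_h Ec'_c'' Pc'_c'' Eb'_b'' Pb'_b'' Ea'_a'' Pa'_a'' _ lt_omega_alpha).
    exact: uniq_swap_branches.
  by rewrite minnC (minnC (pi b'')) -minnA.
- have /negP[] := nth_uniq_neq l (i := 1) (j := 2) distinct isT isT isT.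
  by rewrite /= (inj_pi _ _ eq_pi).
Qed.
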